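(* Let $p$ be an odd prime and $1\le\ell\le p-1$ with Legendre symbol $\left(\frac{4\ell+1}{p}\right)=-1$. Then for all $n,k\ge0$, $$b\!\left(2p^{2k+3}n+\frac{(4\ell+1)p^{2k+2}-1}{2}\right)\equiv 0\pmod 4.$$
   Context: The mock theta function $\mathcal{B}(q)=\sum_{n\ge0}\frac{q^n(-q;q^2)_n}{(q;q^2)_{n+1}}=\sum_{n\ge0}b(n)q^n$, where $(a;q)_n=\prod_{j=0}^{n-1}(1-aq^j)$. *)

From mathcomp Require Import all_boot all_order all_algebra.
Set Implicit Arguments. Unset Strict Implicit. Unset Printing Implicit Defensive.
Import GRing.Theory Num.Theory.
Local Open Scope ring_scope.

(* Truncated expansion of 1/(1 - q^a) as a power series:
   sum_{i=0}^{N} q^(a*i); exact up to degree N when a >= 1. *)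
Definition geom_inv (a N : nat) : {poly int} := \sum_(i < N.+1) 'X^(a * i).

(* Truncation (valid up to degree N) of the m-th summand
   q^m (-q;q^2)_m / (q;q^2)_{m+1}
   = q^m * prod_{j<m} (1 + q^(2j+1)) * prod_{j<m+1} 1/(1 - q^(2j+1)). *)
Definition Bterm (m N : nat) : {poly int} :=
  'X^m * (\prod_(j < m) (1 + 'X^(2 * j + 1)))
       * (\prod_(j < m.+1) geom_inv (2 * j + 1) N).

(* b(n) = coefficient of q^n in B(q) = sum_{m>=0} q^m (-q;q^2)_m/(q;q^2)_{m+1}.
   Only summands m <= n contribute to q^n (each has valuation m), and the
   truncated geometric series are exact up to degree n. *)
Definition b (n : nat) : int := (\sum_(m < n.+1) Bterm m n)`_n.

Definition legendre (a p : nat) : int :=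
  if (p %| a)%N then 0
  else if [exists x : 'I_p, (x ^ 2 == a %[mod p])%N] then 1 else -1.

(* Write B(q) = G(1) / (1 - q) with G(s) = sum_k (-q;q^2)_k q^(sk) / (q^3;q^2)_k.
   G(s) equals a second series R(s), because both satisfy
   (1 - q^s) F(s) = (1 - q) + q (1 + q^s) F(s + 2), which determines F(s) as a
   power series.  The k-th summand of R(1) / (1 - q) is
   q^(2k^2+2k) (1 + q^(4k+2)) / (1 - q^(2k+1))^2 * Y_k^2 with
   Y_k = (-q;q^2)_k / (q;q^2)_k = 1 mod 2, so modulo 4 it is q^(2k^2+2k) plus twice a
   series supported on odd exponents.  Hence b(N) = 0 mod 4 whenever N is even and
   2N + 1 is not a square.  For the N of the theorem, 2N + 1 = p^(2k+2) (4pn + 4l + 1),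
   and if this were a square then so would be 4pn + 4l + 1, making 4l + 1 a quadratic
   residue mod p.  All series are truncated at degree T and compared modulo
   (m, q^(T+1)). *)

From mathcomp Require Import all_boot all_order all_algebra.
From mathcomp Require Import ring zify.
Set Implicit Arguments. Unset Strict Implicit. Unset Printing Implicit Defensive.
Import GRing.Theory.
Local Open Scope ring_scope.

Section CongruenceModX.
Variable R : comNzRingType.
Implicit Types (p q u : {poly R}) (m K : nat).

(* [congX m K p q]: p = q modulo the ideal (m, X^K); [m = 0] means exact
   equality of power series truncated at degree K. *)
Definition congX m K p q := exists r s, p - q = r *+ m + 'X^K * s.

Lemma congX_refl m K p : congX m K p p.
Proof. by exists 0, 0; rewrite subrr mul0rn mulr0 addr0. Qed.

Lemma eq_congX m K p q : p = q -> congX m K p q.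
Proof. by move->; apply: congX_refl. Qed.

Lemma congX_sym m K p q : congX m K p q -> congX m K q p.
Proof. by case=> r [s E]; exists (- r), (- s); rewrite -opprB E mulNrn; ring. Qed.

Lemma congX_trans m K p q u : congX m K p q -> congX m K q u -> congX m K p u.
Proof.
case=> r [s E] [r' [s' E']]; exists (r + r'), (s + s').
by rewrite -[p](subrK q) -addrA E E' mulrnDl; ring.
Qed.

Lemma congXD m K p1 q1 p2 q2 :
  congX m K p1 q1 -> congX m K p2 q2 -> congX m K (p1 + p2) (q1 + q2).
Proof.
case=> r [s E] [r' [s' E']]; exists (r + r'), (s + s').
by rewrite opprD addrACA E E' mulrnDl; ring.
Qed.

Lemma congXN m K p q : congX m K p q -> congX m K (- p) (- q).
Proof. by case=> r [s E]; exists (- r), (- s); rewrite -opprD E mulNrn; ring. Qed.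

Lemma congXB m K p1 q1 p2 q2 :
  congX m K p1 q1 -> congX m K p2 q2 -> congX m K (p1 - p2) (q1 - q2).
Proof. by move=> h1 h2; apply: congXD h1 (congXN h2). Qed.

Lemma congXM m K p1 q1 p2 q2 :
  congX m K p1 q1 -> congX m K p2 q2 -> congX m K (p1 * p2) (q1 * q2).
Proof.
case=> r [s E] [r' [s' E']]; exists (r * p2 + q1 * r'), (s * p2 + q1 * s').
have -> : p1 * p2 - q1 * q2 = (p1 - q1) * p2 + q1 * (p2 - q2) by ring.
by rewrite E E'; ring.
Qed.

Lemma congXMl m K c p q : congX m K p q -> congX m K (c * p) (c * q).
Proof. exact/congXM/congX_refl. Qed.

Lemma congX_mulr0 m K c p : congX m K p 0 -> congX m K (c * p) 0.
Proof. by move=> p0; rewrite -(mulr0 c); apply: congXMl. Qed.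

Lemma congX_sum m K (I : Type) (r : seq I) (P : pred I) (F G : I -> {poly R}) :
  (forall i, P i -> congX m K (F i) (G i)) ->
  congX m K (\sum_(i <- r | P i) F i) (\sum_(i <- r | P i) G i).
Proof.
by move=> FG; apply: (big_ind2 (congX m K)) => //; [apply: congX_refl | apply: congXD].
Qed.

Lemma congX_sum0 m K (I : Type) (r : seq I) (P : pred I) (F : I -> {poly R}) :
  (forall i, P i -> congX m K (F i) 0) -> congX m K (\sum_(i <- r | P i) F i) 0.
Proof.
move=> F0; apply: (big_ind (congX m K ^~ 0)) => //; first exact: congX_refl.
by move=> x y x0 y0; rewrite -[0]addr0; apply: congXD.
Qed.

Lemma congX_prod1 m K (I : Type) (r : seq I) (P : pred I) (F : I -> {poly R}) :
  (forall i, P i -> congX m K (F i) 1) -> congX m K (\prod_(i <- r | P i) F i) 1.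
Proof.
move=> F1; apply: (big_ind (congX m K ^~ 1)) => //; first exact: congX_refl.
by move=> x y x1 y1; rewrite -[1]mulr1; apply: congXM.
Qed.

Lemma congX_subr0 m K p q : congX m K (p - q) 0 <-> congX m K p q.
Proof. by split=> -[r [s E]]; exists r, s; rewrite -E subr0. Qed.

Lemma congX_Xn m K j s : (K <= j)%N -> congX m K ('X^j * s) 0.
Proof.
move=> le_Kj; exists 0, ('X^(j - K) * s).
by rewrite subr0 mul0rn add0r mulrA -exprD subnKC.
Qed.

Lemma congX_addMn m K p r : congX m K (p + r *+ m) p.
Proof. by exists r, 0; rewrite mulr0 addr0 addrAC subrr add0r. Qed.

Lemma congX_mull m K u p : congX m K u 1 -> congX m K (u * p) p.
Proof. by move=> u1; rewrite -[X in congX _ _ _ X]mul1r; apply: congXM (congX_refl _ _ _). Qed.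

Lemma congX_dvd d m K p q : (d %| m)%N -> congX m K p q -> congX d K p q.
Proof.
case/dvdnP=> c ->{m} [r [s E]]; exists (r *+ c), s.
by rewrite E -mulrnA mulnC.
Qed.

Lemma congX_cancel m K a u p q :
  congX m K (a * u) 1 -> congX m K (a * p) (a * q) -> congX m K p q.
Proof.
move=> au apq; have unit_mul x : congX m K (u * (a * x)) x.
  by rewrite mulrA [u * a]mulrC -[X in congX _ _ _ X]mul1r; apply: congXM (congX_refl _ _ _).
apply: congX_trans (congX_sym (unit_mul p)) _.
exact: congX_trans (congXMl u apq) (unit_mul q).
Qed.

Lemma congX_sqr K y : congX 2 K y 1 -> congX 4 K (y ^+ 2) 1.
Proof.
case=> r [s E]; exists (r + r ^+ 2), ('X^K * s ^+ 2 + (2%:R + r *+ 4) * s).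
have -> : y = 1 + (r *+ 2 + 'X^K * s) by rewrite -E; ring.
ring.
Qed.

End CongruenceModX.

Section EvenSupport.
Variable R : nzRingType.
Implicit Types p q : {poly R}.

Definition even_support p := forall i, odd i -> p`_i = 0.

Lemma even_supportD p q : even_support p -> even_support q -> even_support (p + q).
Proof. by move=> ep eq i oi; rewrite coefD ep // eq // addr0. Qed.

Lemma even_supportM p q : even_support p -> even_support q -> even_support (p * q).
Proof.
move=> ep eq i oi; rewrite coefM big1 // => j _.
have [oj|ej] := boolP (odd j); first by rewrite ep // mul0r.
by rewrite eq ?mulr0 // oddB ?oi ?(negbTE ej) // -ltnS.
Qed.

Lemma even_support_Xn m : even_support 'X^(2 * m).
Proof. by move=> i oi; rewrite coefXn; case: eqP oi => // ->; rewrite oddM. Qed.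

Lemma even_support1 : even_support 1.
Proof. by have := even_support_Xn 0; rewrite muln0 expr0. Qed.

Lemma even_support_sum (I : Type) (r : seq I) (P : pred I) (F : I -> {poly R}) :
  (forall i, P i -> even_support (F i)) -> even_support (\sum_(i <- r | P i) F i).
Proof.
move=> eF; apply: (big_ind even_support) => // [i _|]; first by rewrite coef0.
exact: even_supportD.
Qed.

Lemma coef_odd_XnM c p i :
  odd c -> even_support p -> ~~ odd i -> ('X^c * p)`_i = 0.
Proof.
move=> oc ep ei; rewrite coefXnM; case: ltnP => // le_ci.
by apply: ep; rewrite oddB // oc (negbTE ei).
Qed.

End EvenSupport.

Lemma geom_invE a T : (1 - 'X^a) * geom_inv a T = 1 - 'X^(a * T.+1).
Proof.
rewrite /geom_inv; elim: T.+1 => [|n IHn]; first by rewrite big_ord0 muln0 mulr0 subrr.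
by rewrite big_ord_recr /= mulrDr IHn mulnS exprD; ring.
Qed.

Lemma geom_invP m T a : (0 < a)%N -> congX m T.+1 ((1 - 'X^a) * geom_inv a T) 1.
Proof.
move=> a_gt0; rewrite geom_invE -congX_subr0.
have -> : 1 - 'X^(a * T.+1) - 1 = - ('X^(a * T.+1) * 1) :> {poly int} by ring.
by rewrite -oppr0; apply/congXN/congX_Xn; rewrite leq_pmull.
Qed.

Lemma geom_inv_mod2 T a : (0 < a)%N -> congX 2 T.+1 ((1 + 'X^a) * geom_inv a T) 1.
Proof.
move=> a_gt0; have -> : (1 + 'X^a) * geom_inv a T =
  (1 - 'X^a) * geom_inv a T + ('X^a * geom_inv a T) *+ 2 by ring.
exact: congX_trans (congX_addMn _ _ _ _) (geom_invP _ _ a_gt0).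
Qed.

Section QSeriesIdentity.
Variable T : nat.

(* [(-q^a; q^2)_k] and the truncation at degree [T] of [1 / (q^a; q^2)_k]. *)
Definition qpochD a k : {poly int} := \prod_(i < k) (1 + 'X^(a + 2 * i)).
Definition qpochInv a k : {poly int} := \prod_(i < k) geom_inv (a + 2 * i) T.

Lemma qpochDS a k : qpochD a k.+1 = qpochD a k * (1 + 'X^(a + 2 * k)).
Proof. by rewrite /qpochD big_ord_recr. Qed.

Lemma qpochInvS a k : qpochInv a k.+1 = qpochInv a k * geom_inv (a + 2 * k) T.
Proof. by rewrite /qpochInv big_ord_recr. Qed.

Lemma qpochD_shift a k : (1 + 'X^a) * qpochD (a + 2) k = qpochD a k.+1.
Proof.
rewrite /qpochD big_ord_recl muln0 addn0; congr (_ * _).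
by apply: eq_bigr => i _; rewrite /bump /= mulnSr addnA addnAC.
Qed.

Lemma qpochInv_shift a k : geom_inv a T * qpochInv (a + 2) k = qpochInv a k.+1.
Proof.
rewrite /qpochInv big_ord_recl muln0 addn0; congr (_ * _).
by apply: eq_bigr => i _; rewrite /bump /= mulnSr addnA addnAC.
Qed.

Definition Gser s := \sum_(k < T.+1) qpochD 1 k * qpochInv 3 k * 'X^(s * k).

Lemma sum_Bterm : \sum_(m < T.+1) Bterm m T = geom_inv 1 T * Gser 1.
Proof.
rewrite /Gser mulr_sumr; apply: eq_bigr => m _.
have -> : Bterm m T = 'X^m * qpochD 1 m * qpochInv 1 m.+1.
  by congr (_ * _ * _); apply: eq_bigr => j _; rewrite addnC.
by rewrite -qpochInv_shift mul1n; ring.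
Qed.

Lemma sumrB_ord_shift (V : zmodType) (F H : nat -> V) n :
  \sum_(k < n.+1) F k - \sum_(k < n.+1) H k = F 0%N + \sum_(k < n) (F k.+1 - H k) - H n.
Proof. by rewrite big_ord_recl big_ord_recr /= sumrB opprD !addrA. Qed.

Lemma Gser_shift s : (0 < s)%N ->
  congX 0 T.+1 ((1 - 'X^s) * Gser s) ((1 - 'X) + 'X * (1 + 'X^s) * Gser (s + 2)).
Proof.
move=> s_gt0; pose c k := qpochD 1 k * qpochInv 3 k.
pose a k := c k * 'X^(s * k) * (1 - 'X^(1 + 2 * k)).
pose b k := c k * 'X^(s * k.+1) * (1 + 'X^(1 + 2 * k)).
have E : (1 - 'X^s) * Gser s - 'X * (1 + 'X^s) * Gser (s + 2) =
    \sum_(k < T.+1) a k - \sum_(k < T.+1) b k.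
  rewrite /Gser !mulr_sumr -!sumrB; apply: eq_bigr => k _.
  by rewrite /a /b /c mulnDl mulnS !exprD; ring.
rewrite -congX_subr0 (_ : _ - (_ + _) = (1 - 'X^s) * Gser s - 'X * (1 + 'X^s) * Gser (s + 2)
  - (1 - 'X)); last by ring.
rewrite congX_subr0 E sumrB_ord_shift.
have -> : a 0%N = 1 - 'X.
  by rewrite /a /c /qpochD /qpochInv !big_ord0 !muln0 addn0 expr0 expr1 !mul1r.
rewrite -[X in congX _ _ _ X]subr0 -[X in congX _ _ _ (X - _)]addr0.
apply: congXB; first apply: congXD; first exact: congX_refl.
  apply: congX_sum0 => k _; rewrite congX_subr0.
  have -> : a k.+1 = ((1 - 'X^(3 + 2 * k)) * geom_inv (3 + 2 * k) T) * b k.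
    by rewrite /a /b /c qpochDS qpochInvS (_ : 1 + 2 * k.+1 = 3 + 2 * k)%N; [ring | lia].
  by apply/congX_mull/geom_invP; rewrite addn_gt0.
have -> : b T = 'X^(s * T.+1) * (c T * (1 + 'X^(1 + 2 * T))) by rewrite /b; ring.
by apply: congX_Xn; rewrite leq_pmull.
Qed.

Definition Rprod s k := qpochD 1 k * qpochD s k * 'X^(2 * k * k + k + s * k) *
  qpochInv 3 k * qpochInv s k.+1.
Definition Rser s := \sum_(k < T.+1) Rprod s k * (1 + 'X^(s + 4 * k + 1)).

Lemma RprodS s k : Rprod s k.+1 = Rprod s k * (1 + 'X^(1 + 2 * k)) * (1 + 'X^(s + 2 * k)) *
  'X^(4 * k + 3 + s) * geom_inv (3 + 2 * k) T * geom_inv (s + 2 * k.+1) T.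
Proof.
rewrite /Rprod !qpochDS (qpochInvS _ k.+1) qpochInvS.
rewrite (_ : 2 * k.+1 * k.+1 + k.+1 + s * k.+1 = 2 * k * k + k + s * k + (4 * k + 3 + s))%N;
  last by lia.
by rewrite (exprD _ (2 * k * k + k + s * k)); ring.
Qed.

Lemma Rprod_shift s k : (0 < s)%N ->
  congX 0 T.+1 (Rprod (s + 2) k * (1 + 'X^s))
    ((1 - 'X^s) * (Rprod s k * (1 + 'X^(s + 2 * k)) * 'X^(2 * k) * geom_inv (s + 2 * k.+1) T)).
Proof.
move=> s_gt0; have -> : Rprod s k * (1 + 'X^(s + 2 * k)) * 'X^(2 * k) *
    geom_inv (s + 2 * k.+1) T = geom_inv s T * (Rprod (s + 2) k * (1 + 'X^s)).
  transitivity (qpochD 1 k * ((1 + 'X^s) * qpochD (s + 2) k) *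
    'X^(2 * k * k + k + (s + 2) * k) * qpochInv 3 k * (geom_inv s T * qpochInv (s + 2) k.+1));
    last by rewrite /Rprod; ring.
  rewrite qpochD_shift qpochInv_shift qpochDS (qpochInvS s k.+1).
  rewrite (_ : 2 * k * k + k + (s + 2) * k = 2 * k * k + k + s * k + 2 * k)%N; last by lia.
  by rewrite /Rprod (exprD _ (2 * k * k + k + s * k)); ring.
by rewrite mulrA; apply/congX_sym/congX_mull/geom_invP.
Qed.

Definition Rtele s k := (1 - 'X^s) * (1 - 'X^(1 + 2 * k)) * Rprod s k.

Lemma Rterm_telescope s k : (0 < s)%N ->
  congX 0 T.+1 ((1 - 'X^s) * (Rprod s k * (1 + 'X^(s + 4 * k + 1)))
      - 'X * (1 + 'X^s) * (Rprod (s + 2) k * (1 + 'X^(s + 2 + 4 * k + 1))))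
    (Rtele s k - Rtele s k.+1).
Proof.
move=> s_gt0; rewrite /Rtele RprodS.
have HQ := Rprod_shift k s_gt0.
set P := Rprod s k; set Q := Rprod (s + 2) k.
set u := geom_inv (s + 2 * k.+1) T; set v := geom_inv (3 + 2 * k) T.
have Hu : congX 0 T.+1 (1 - (1 - 'X^(s + 2 * k.+1)) * u) 0.
  by apply/congX_subr0/congX_sym/geom_invP/ltn_addr.
have Hv : congX 0 T.+1 ((1 - 'X^(3 + 2 * k)) * v - 1) 0 by apply/congX_subr0/geom_invP.
set t := 'X^s in HQ *; set e := 'X^(2 * k) in HQ *.
have x1 : 'X^(s + 4 * k + 1) = t * e * e * 'X^1 :> {poly int}.
  by rewrite /t /e -!exprD; congr (_ ^+ _); lia.
have x2 : 'X^(s + 2 + 4 * k + 1) = t * e * e * 'X^3 :> {poly int}.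
  by rewrite /t /e -!exprD; congr (_ ^+ _); lia.
have x3 : 'X^(1 + 2 * k) = e * 'X^1 :> {poly int} by rewrite /e -exprD addnC.
have x4 : 'X^(s + 2 * k) = t * e :> {poly int} by rewrite /e exprD.
have x5 : 'X^(s + 2 * k.+1) = t * e * 'X^2 :> {poly int}.
  by rewrite /t /e -!exprD; congr (_ ^+ _); lia.
have x6 : 'X^(3 + 2 * k) = e * 'X^3 :> {poly int} by rewrite /e -exprD addnC.
have x7 : 'X^(1 + 2 * k.+1) = e * 'X^3 :> {poly int}.
  by rewrite /e -exprD; congr (_ ^+ _); lia.
have x8 : 'X^(4 * k + 3 + s) = e * e * 'X^3 * t :> {poly int}.
  by rewrite /t /e -!exprD; congr (_ ^+ _); lia.
rewrite x1 x2 x3 x4 x7 x8; rewrite x4 in HQ; rewrite x5 in Hu; rewrite x6 in Hv.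
rewrite -congX_subr0.
(* [L - M] is a combination of the three truncation errors [Hu], [HQ] and [Hv]. *)
set L := (X in congX _ _ (X - _) _); set M := (X in congX _ _ (_ - X) _).
have -> : L - M =
  (1 - t) * P * e * 'X * (1 + t * e) * (1 - (1 - t * e * 'X^2) * u)
  - 'X * (1 + t * e * e * 'X^3) * (Q * (1 + t) - (1 - t) * (P * (1 + t * e) * e * u))
  + (1 - t) * P * (1 + e * 'X) * (1 + t * e) * (e * e * 'X^3) * t * u *
    ((1 - e * 'X^3) * v - 1).
  by rewrite /L /M; ring.
rewrite -congX_subr0 in HQ.
apply: congX_trans (congXD (congXB (congX_mulr0 _ Hu) (congX_mulr0 _ HQ))
  (congX_mulr0 _ Hv)) _.
by rewrite subr0 addr0; apply: congX_refl.
Qed.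

Lemma Rser_shift s : (0 < s)%N ->
  congX 0 T.+1 ((1 - 'X^s) * Rser s) ((1 - 'X) + 'X * (1 + 'X^s) * Rser (s + 2)).
Proof.
move=> s_gt0.
rewrite -congX_subr0 (_ : _ - (_ + _) = (1 - 'X^s) * Rser s - 'X * (1 + 'X^s) * Rser (s + 2)
  - (1 - 'X)); last by ring.
rewrite congX_subr0 /Rser !mulr_sumr -sumrB.
eapply congX_trans; first by apply: congX_sum => k _; apply: Rterm_telescope.
have -> : \sum_(k < T.+1) (Rtele s k - Rtele s k.+1) = Rtele s 0 - Rtele s T.+1.
  by rewrite -opprB -telescope_sumr // big_mkord -sumrN; apply: eq_bigr => k _; rewrite opprB.
have -> : Rtele s 0 = ((1 - 'X^s) * geom_inv s T) * (1 - 'X).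
  by rewrite /Rtele /Rprod /qpochD /qpochInv !big_ord0 big_ord1 !muln0 !addn0 expr0 expr1; ring.
have -> : Rtele s T.+1 = 'X^(s * T.+1) * ((1 - 'X^s) * (1 - 'X^(1 + 2 * T.+1)) *
    qpochD 1 T.+1 * qpochD s T.+1 * 'X^(2 * T.+1 * T.+1 + T.+1) * qpochInv 3 T.+1 *
    qpochInv s T.+2).
  by rewrite /Rtele /Rprod (exprD _ (2 * T.+1 * T.+1 + T.+1)); ring.
rewrite -[X in congX _ _ _ X]subr0; apply: congXB; first exact/congX_mull/geom_invP.
by apply: congX_Xn; rewrite leq_pmull.
Qed.

(* [Gser - Rser] satisfies [(1 - q^s) D(s) = q (1 + q^s) D(s + 2)], so each shift of
   [s] buys one more factor of [q]. *)
Lemma Gser_Rser_divX j s : (0 < s)%N ->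
  exists r, congX 0 T.+1 (Gser s - Rser s) ('X^j * r).
Proof.
elim: j s => [|j IHj] s s_gt0.
  by exists (Gser s - Rser s); rewrite expr0 mul1r; apply: congX_refl.
have [r Hr] := IHj (s + 2)%N (ltn_addr _ s_gt0).
have Hw := @geom_invP 0 T s s_gt0.
exists (geom_inv s T * (1 + 'X^s) * r); apply: (congX_cancel Hw).
have shiftD : congX 0 T.+1 ((1 - 'X^s) * (Gser s - Rser s))
    ('X * (1 + 'X^s) * (Gser (s + 2) - Rser (s + 2))).
  rewrite mulrBr (_ : 'X * _ * (_ - _) = (1 - 'X + 'X * (1 + 'X^s) * Gser (s + 2))
    - (1 - 'X + 'X * (1 + 'X^s) * Rser (s + 2))); last by ring.
  exact: congXB (Gser_shift s_gt0) (Rser_shift s_gt0).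
apply: congX_trans shiftD (congX_trans (congXMl _ Hr) _).
rewrite (_ : 'X * _ * _ = 'X^(j.+1) * (1 + 'X^s) * r); last by rewrite exprS; ring.
rewrite (_ : (1 - 'X^s) * _ = ((1 - 'X^s) * geom_inv s T) * ('X^(j.+1) * (1 + 'X^s) * r));
  last by ring.
by apply/congX_sym/congX_mull.
Qed.

Lemma Gser_Rser s : (0 < s)%N -> congX 0 T.+1 (Gser s) (Rser s).
Proof.
move=> s_gt0; have [r Hr] := Gser_Rser_divX T.+1 s_gt0.
by rewrite -congX_subr0; apply: congX_trans Hr (congX_Xn _ _ _).
Qed.

Lemma geom_inv_sqr_mod4 a : (0 < a)%N ->
  congX 4 T.+1 ((1 + 'X^(2 * a)) * geom_inv a T ^+ 2)
    (1 + ('X^a * ((1 + 'X^(2 * a)) * geom_inv (2 * a) T ^+ 2)) *+ 2).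
Proof.
move=> a_gt0; have a2_gt0 : (0 < 2 * a)%N by rewrite muln_gt0.
have x2 : 'X^(2 * a) = 'X^a ^+ 2 :> {poly int} by rewrite -exprM mulnC.
have g_split : congX 0 T.+1 (geom_inv a T) ((1 + 'X^a) * geom_inv (2 * a) T).
  apply: (congX_cancel (geom_invP 0 T a_gt0)); apply: congX_trans (geom_invP 0 T a_gt0) _.
  rewrite mulrA (_ : (1 - 'X^a) * (1 + 'X^a) = 1 - 'X^(2 * a)); last by rewrite x2; ring.
  exact/congX_sym/geom_invP.
have sq_mod4 := congX_sqr (geom_inv_mod2 T a2_gt0).
apply: congX_trans (congX_dvd (dvdn0 4) (congXMl _ (congXM g_split g_split))) _.
set J := geom_inv (2 * a) T.
have -> : (1 + 'X^(2 * a)) * (((1 + 'X^a) * J) * ((1 + 'X^a) * J)) =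
    ((1 + 'X^(2 * a)) * J) ^+ 2 + ('X^a * ((1 + 'X^(2 * a)) * J ^+ 2)) *+ 2.
  by rewrite x2; ring.
exact: congXD sq_mod4 (congX_refl _ _ _).
Qed.

Definition Yprod k := qpochD 1 k * qpochInv 1 k.

Lemma Yprod_mod2 k : congX 2 T.+1 (Yprod k) 1.
Proof.
rewrite /Yprod /qpochD /qpochInv -big_split /=.
by apply: congX_prod1 => i _; apply: geom_inv_mod2; rewrite addn_gt0.
Qed.

Lemma Rterm1E k : geom_inv 1 T * (Rprod 1 k * (1 + 'X^(1 + 4 * k + 1))) =
  'X^(2 * k * k + 2 * k) * ((1 + 'X^(2 * (1 + 2 * k))) * geom_inv (1 + 2 * k) T ^+ 2) *
  Yprod k ^+ 2.
Proof.
transitivity (qpochD 1 k ^+ 2 * 'X^(2 * k * k + k + 1 * k) *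
  (geom_inv 1 T * qpochInv 3 k) * qpochInv 1 k.+1 * (1 + 'X^(1 + 4 * k + 1))).
  by rewrite /Rprod; ring.
rewrite qpochInv_shift qpochInvS (_ : 1 + 4 * k + 1 = 2 * (1 + 2 * k))%N; last by lia.
by rewrite mul1n -addnA addnn -mul2n /Yprod; ring.
Qed.

Definition Rcorr k := (1 + 'X^(2 * (1 + 2 * k))) * geom_inv (2 * (1 + 2 * k)) T ^+ 2.

Lemma even_support_Rcorr k : even_support (Rcorr k).
Proof.
have even_geom : even_support (geom_inv (2 * (1 + 2 * k)) T).
  by apply: even_support_sum => i _; rewrite -mulnA; apply: even_support_Xn.
by apply: even_supportM; [apply: even_supportD (even_support1 _) (even_support_Xn _ _)
  | apply: even_supportM].
Qed.

Lemma Rterm1_mod4 k :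
  congX 4 T.+1 (geom_inv 1 T * (Rprod 1 k * (1 + 'X^(1 + 4 * k + 1))))
    ('X^(2 * k * k + 2 * k) + ('X^(2 * k * k + 4 * k + 1) * Rcorr k) *+ 2).
Proof.
rewrite Rterm1E.
apply: congX_trans (congXM (congXMl _ (geom_inv_sqr_mod4 (isT : 0 < 1 + 2 * k)%N))
  (congX_sqr (Yprod_mod2 k))) _.
rewrite (_ : 2 * k * k + 4 * k + 1 = 2 * k * k + 2 * k + (1 + 2 * k))%N; last by lia.
by apply: eq_congX; rewrite (exprD _ (2 * k * k + 2 * k)) /Rcorr; ring.
Qed.

Lemma sum_Bterm_mod4 :
  congX 4 T.+1 (\sum_(m < T.+1) Bterm m T)
    (\sum_(k < T.+1) 'X^(2 * k * k + 2 * k) +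
     (\sum_(k < T.+1) 'X^(2 * k * k + 4 * k + 1) * Rcorr k) *+ 2).
Proof.
rewrite sum_Bterm.
apply: congX_trans (congX_dvd (dvdn0 4) (congXMl _ (Gser_Rser (isT : 0 < 1)%N))) _.
rewrite /Rser mulr_sumr -sumrMnl -big_split /=.
by apply: congX_sum => k _; apply: Rterm1_mod4.
Qed.

End QSeriesIdentity.

Lemma congX_coef m K N (p q : {poly int}) :
  congX m K p q -> (N < K)%N -> (m%:Z %| p`_N - q`_N)%Z.
Proof.
case=> r [s E] lt_NK; rewrite -coefB E coefD coefMn coefXnM lt_NK addr0.
by apply/dvdzP; exists r`_N; rewrite -mulr_natr natz.
Qed.

Lemma b_even_dvd4 N : ~~ odd N -> (forall y, y ^ 2 != N.*2.+1)%N -> (4 %| b N)%Z.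
Proof.
move=> evenN nonsq; have := congX_coef (sum_Bterm_mod4 N) (ltnSn N).
rewrite -/(b N) coefD coefMn !coef_sum big1 => [|k _]; last first.
  rewrite coefXn; case: eqP => // Nk; case/negP: (nonsq (2 * k + 1)%N).
  move/(congr1 (fun x => x.*2.+1)): Nk => ->.
  by rewrite -mul2n; apply/eqP; ring.
rewrite big1 ?mul0rn ?add0r ?subr0 // => k _.
apply: coef_odd_XnM evenN; last exact: even_support_Rcorr.
rewrite (_ : 2 * k * k + 4 * k + 1 = (k * k + 2 * k).*2.+1)%N; first by rewrite /= odd_double.
by rewrite -mul2n; ring.
Qed.

Local Close Scope ring_scope.

Lemma legendre_nonresidue a p z : 0 < p -> legendre a p = (-1)%R -> z ^ 2 != a %[mod p].
Proof.
move=> p_gt0; rewrite /legendre; case: ifP => // _.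
case: existsP => // nonres _; apply/negP => za; apply: nonres.
by exists (Ordinal (ltn_pmod z p_gt0)); rewrite /= modnXm.
Qed.

Lemma square_cofactor Q y B : 0 < Q -> y ^ 2 = Q ^ 2 * B -> exists z, B = z ^ 2.
Proof.
move=> Q_gt0 yE; have : Q ^ 2 %| y ^ 2 by rewrite yE dvdn_mulr.
rewrite dvdn_pexp2r // => /dvdnP [z yzQ]; exists z.
have Q2_gt0 : 0 < Q ^ 2 by rewrite expn_gt0 Q_gt0.
by apply/eqP; rewrite -(eqn_pmul2l Q2_gt0) -yE yzQ expnMn mulnC.
Qed.

Lemma half_sqr_odd l h :
  ((4 * l + 1) * h.*2.+1 ^ 2 - 1) %/ 2 = (l * h.*2.+1 ^ 2 + h * h.+1).*2.
Proof.
rewrite (_ : _ - 1 = (l * h.*2.+1 ^ 2 + h * h.+1).*2 * 2); first by rewrite mulnK.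
by rewrite -!mul2n; lia.
Qed.

Local Open Scope ring_scope.

Theorem corollary1p6 (p l : nat) :
  prime p -> odd p -> (1 <= l)%N -> (l <= p - 1)%N ->
  legendre (4 * l + 1) p = -1 ->
  forall n k : nat,
    (4 %| b (2 * p ^ (2 * k + 3) * n + ((4 * l + 1) * p ^ (2 * k + 2) - 1) %/ 2))%Z.
Proof.
move=> p_prime p_odd _ _ nonres n k; have p_gt0 := prime_gt0 p_prime.
have [h Qh] : exists h, (p ^ k.+1 = h.*2.+1)%N.
  by exists (p ^ k.+1)%N./2; rewrite -[LHS]odd_double_half oddX p_odd orbT.
have pow_even : (p ^ (2 * k + 2) = h.*2.+1 ^ 2)%N.
  by rewrite -Qh -expnM; congr expn; lia.
rewrite (_ : p ^ (2 * k + 3) = h.*2.+1 ^ 2 * p)%N; last by rewrite -pow_even -expnSr addnS.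
rewrite pow_even half_sqr_odd.
apply: b_even_dvd4 => [|y]; first by rewrite oddD !oddM odd_double.
apply/eqP => yE.
have [z Bz] : exists z, (4 * p * n + (4 * l + 1) = z ^ 2)%N.
  by apply: (square_cofactor (y := y) (ltn0Sn h.*2)); rewrite yE -!mul2n; ring.
by have := legendre_nonresidue z p_gt0 nonres; rewrite -Bz mulnAC modnMDl eqxx.
Qed.
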